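(* Let $G_2$ be the graph with vertices $v_1,\dots,v_6$ and edges $a_1=v_2v_6$, $a_2=v_2v_4$, $a_3=v_4v_6$, $a_4=v_1v_3$, $a_5=v_3v_5$, $a_6=v_1v_5$, $a_7=v_2v_5$, $a_8=v_1v_4$, $a_9=v_3v_6$. Then $$F^{G_2}(\mathbf{x},y)=\frac{1}{(1-yx_1x_5x_8)(1-yx_2x_6x_9)(1-yx_3x_4x_7)(1-yx_7x_8x_9)}+\frac{y^2x_1x_2x_3x_4x_5x_6}{(1-yx_1x_5x_8)(1-yx_2x_6x_9)(1-yx_3x_4x_7)(1-y^2x_1x_2x_3x_4x_5x_6)},$$ and consequently $F^{G_2}(y)=\frac{1+y+y^2}{(1-y)^3(1-y^2)}$.
   Context: For a finite graph $G$ with edges $a_1,\dots,a_n$, a magic labelling is an assignment of nonnegative integer labels $\alpha_i$ to the edges $a_i$ such that for every vertex $v$ the sum of the labels of the edges incident to $v$ equals the same number $s=s(\alpha)$ (the magic sum). A labelling is identified with $\alpha=(\alpha_1,\dots,\alpha_n)\in\mathbb{N}^n$, and $S(G)$ is the set of all magic labellings. Define the formal power series $F^G(\mathbf{x},y)=\sum_{\alpha\in S(G)}x_1^{\alpha_1}\cdots x_n^{\alpha_n}y^{s(\alpha)}$ and $F^G(y)=F^G(1,\dots,1,y)=\sum_{s\ge0}h_G(s)y^s$, where $h_G(s)$ is the number of magic labellings with magic sum $s$. *)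

From mathcomp Require Import all_boot all_order all_algebra.
From mathcomp Require Import mpoly.
Set Implicit Arguments. Unset Strict Implicit. Unset Printing Implicit Defensive.
Import GRing.Theory.
Local Open Scope ring_scope.

Definition incident (nv ne : nat) (ends : 'I_ne -> 'I_nv * 'I_nv)
  (v : 'I_nv) (i : 'I_ne) : bool := ((ends i).1 == v) || ((ends i).2 == v).

Definition is_magic (nv ne : nat) (ends : 'I_ne -> 'I_nv * 'I_nv)
  (alpha : 'I_ne -> nat) (s : nat) : bool :=
  [forall v : 'I_nv, (\sum_(i < ne | incident ends v i) alpha i)%N == s].

(* The graph G_2: vertex v_k is (inord (k-1)) : 'I_6, edge a_k is
   (inord (k-1)) : 'I_9. *)
Definition G2_edges : seq (nat * nat) :=
  [:: (2,6); (2,4); (4,6); (1,3); (3,5); (1,5); (2,5); (1,4); (3,6)].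

Definition G2_ends (i : 'I_9) : 'I_6 * 'I_6 :=
  let e := nth (0,0)%N G2_edges i in (inord e.1.-1, inord e.2.-1).

(* Formal power series in the 10 variables x_1..x_9 (indices 0..8) and
   y (index 9) are represented by their coefficient functions on monomials
   'X_{1..10}. *)
Definition fps := 'X_{1..10} -> int.

Definition X (k : nat) : {mpoly int[10]} := 'X_(inord k.-1).
Definition Y : {mpoly int[10]} := 'X_(inord 9).

(* F^{G_2}(x,y) = sum over magic labellings alpha of x^alpha y^{s(alpha)}:
   the coefficient of x^alpha y^s is 1 iff alpha is magic with sum s. *)
Definition FG2 : fps := fun m =>
  (is_magic G2_ends (fun i : 'I_9 => m (inord i)) (m (inord 9)) : nat)%:Z.

Definition mul_poly_fps (p : {mpoly int[10]}) (f : fps) : fps := fun m =>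
  \sum_(m' <- msupp p | (m' <= m)%MM) p@_m' * f (m - m')%MM.

(* Every label is at most s (each edge is incident to a vertex whose
   incident labels sum to s), so labellings are enumerated with labels in
   'I_s.+1. *)
Definition hG2 (s : nat) : nat :=
  #|[set a : {ffun 'I_9 -> 'I_s.+1} |
      is_magic G2_ends (fun i => nat_of_ord (a i)) s]|.

Definition mul_poly_fps1 (p : {poly int}) (h : nat -> nat) (s : nat) : int :=
  \sum_(k < s.+1) p`_k * (h (s - k)%N)%:Z.

(* Every magic labelling of G_2 is determined by its magic sum s and the
   labels of the triangle a_1 a_2 a_3.  The monomials A = y x1 x5 x8,
   B = y x2 x6 x9, C = y x3 x4 x7, D = y x7 x8 x9 and E = y^2 x1 x2 x3 x4 x5 x6
   are magic, with ABC = DE, and every magic labelling is uniquely of the form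
   A^a B^b C^c D^d (when a_3 <= a_7) or A^a B^b C^c E^e with e >= 1 (when
   a_7 < a_3).  Multiplying the indicator series of such a family by 1 - u,
   u one of its generators, removes that generator: (1-A)(1-B)(1-C)(1-D)
   reduces the first family to 1 and (1-A)(1-B)(1-C)(1-E) the second to E,
   and the two remaining factors give (1 - E) + E (1 - D).
   Setting x = 1, the labellings with magic sum s are the triples (i, j, k)
   of triangle labels with pairwise sums at most s.  Splitting off the
   triples with a zero entry gives h(s+2) = h(s) + C(s+4,2) + C(s+3,2) +
   C(s+2,2), a quadratic increment that (1-y)^3 annihilates. *)

From mathcomp Require Import all_boot all_order all_algebra.
From mathcomp Require Import mpoly.
From mathcomp Require Import zify ring.

Set Implicit Arguments.
Unset Strict Implicit.
Unset Printing Implicit Defensive.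

Import GRing.Theory.
Local Open Scope ring_scope.

Lemma mul_poly_fps_seq p f m (s : seq 'X_{1..10}) :
  uniq s -> {subset msupp p <= s} ->
  mul_poly_fps p f m = \sum_(v <- s | (v <= m)%MM) p@_v * f (m - v)%MM.
Proof.
move=> uniq_s supp_s; rewrite /mul_poly_fps [RHS](bigID (fun v => v \in msupp p)) /=.
rewrite [X in _ = _ + X]big1 ?addr0; last first.
  by move=> v /andP[_ /memN_msupp_eq0 ->]; rewrite mul0r.
rewrite -big_filter -[RHS]big_filter; apply: perm_big.
apply: uniq_perm; rewrite ?filter_uniq ?msupp_uniq // => v; rewrite !mem_filter.
by case: (boolP (v \in msupp p)) => [/supp_s -> | _]; rewrite ?andbF ?andbT.
Qed.

Lemma mul_poly_fpsBl p q f m :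
  mul_poly_fps (p - q) f m = mul_poly_fps p f m - mul_poly_fps q f m.
Proof.
pose s := undup (msupp p ++ msupp q).
have supp_p : {subset msupp p <= s} by move=> v v_p; rewrite mem_undup mem_cat v_p.
have supp_q : {subset msupp q <= s} by move=> v v_q; rewrite mem_undup mem_cat v_q orbT.
have supp_pq : {subset msupp (p - q) <= s} by move=> v /msuppB_le; rewrite mem_undup.
rewrite !(@mul_poly_fps_seq _ _ _ s) ?undup_uniq // -sumrB.
by apply: eq_bigr => v _; rewrite mcoeffB mulrBl.
Qed.

Lemma mul_poly_fpsDr p f g m :
  mul_poly_fps p (fun m' => f m' + g m') m = mul_poly_fps p f m + mul_poly_fps p g m.
Proof. by rewrite -big_split; apply: eq_bigr => v _; rewrite mulrDr. Qed.

Lemma eq_mul_poly_fps p f g : f =1 g -> mul_poly_fps p f =1 mul_poly_fps p g.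
Proof. by move=> eq_fg m; apply: eq_bigr => v _; rewrite eq_fg. Qed.

Lemma mul1_poly_fps f : mul_poly_fps 1 f =1 f.
Proof.
move=> m; rewrite (@mul_poly_fps_seq _ _ _ [:: 0%MM]) //; last by rewrite msupp1.
have le0m : (0 <= m)%MM by apply/mnm_lepP => i; rewrite mnm0E.
by rewrite big_cons big_nil le0m mcoeff1 eqxx mul1r subm0 addr0.
Qed.

Lemma mul_poly_fpsXl u q f m : mul_poly_fps ('X_[u] * q) f m =
  if (u <= m)%MM then mul_poly_fps q f (m - u)%MM else 0.
Proof.
rewrite mulrC (@mul_poly_fps_seq _ _ _ [seq (u + v)%MM | v <- msupp q]); first last.
- by move=> v; rewrite (perm_mem (msuppMX q u)).
- by rewrite map_inj_uniq ?msupp_uniq //; apply: addmI.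
rewrite big_map; case: ifP => [le_um | le_um]; last first.
  by rewrite big_pred0 // => v; apply: contraFF le_um; apply: lepm_trans (lem_addr u v).
apply: eq_big => v; last by rewrite mcoeffMX submDA.
apply/mnm_lepP/mnm_lepP => le_v i; have := mnm_lepP le_um i; have := le_v i;
  rewrite mnmDE mnmBE; lia.
Qed.

Definition fps_diff (u : 'X_{1..10}) (f : fps) : fps :=
  fun m => f m - (if (u <= m)%MM then f (m - u)%MM else 0).

Lemma eq_fps_diff u f g : f =1 g -> fps_diff u f =1 fps_diff u g.
Proof. by move=> eq_fg m; rewrite /fps_diff !eq_fg. Qed.

Lemma mul_poly_fps_prod1subX (us : seq 'X_{1..10}) f :
  mul_poly_fps (\prod_(u <- us) (1 - 'X_[u])) f =1 foldr fps_diff f us.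
Proof.
elim: us => [|u us IHus] m; first by rewrite big_nil mul1_poly_fps.
rewrite big_cons mulrBl mul1r mul_poly_fpsBl mul_poly_fpsXl /=.
by rewrite -(eq_fps_diff u IHus m).
Qed.

Definition fps_ind (S : pred 'X_{1..10}) : fps := fun m => (S m)%:Z.

(* S is the disjoint union of T and u + S. *)
Lemma fps_diff_ind u f (S T : pred 'X_{1..10}) :
  (forall m, S (m + u)%MM = T (m + u)%MM || S m) ->
  (forall m, T (m + u)%MM -> ~~ S m) ->
  (forall m, ~~ (u <= m)%MM -> S m = T m) ->
  f =1 fps_ind S -> fps_diff u f =1 fps_ind T.
Proof.
move=> S_add T_add S_small eq_f m; rewrite /fps_diff !eq_f /fps_ind.
case: ifP => [le_um | /negbT/S_small ->]; last by rewrite subr0.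
rewrite -(submK le_um) addmK S_add.
by case: (boolP (T _)) => [/T_add/negbTE -> | _]; rewrite ?subr0 ?subrr.
Qed.

Lemma fps_diff_ind1 u f t : f =1 fps_ind (pred1 t) ->
  fps_diff u f =1 fun m => fps_ind (pred1 t) m - fps_ind (pred1 (t + u)%MM) m.
Proof.
move=> eq_f m; rewrite /fps_diff !eq_f /fps_ind /=; congr (_ - _).
have [le_um | le_um] := boolP (u <= m)%MM.
  by rewrite -(submK le_um) addmK eqm_add2r.
by case: eqP le_um => // ->; rewrite lem_addl.
Qed.

(* [mexp m k] is the label of a_(k+1) for k < 9, and the magic sum for k = 9. *)
Definition mexp (m : 'X_{1..10}) (k : nat) : nat := m (inord k).

Lemma mexp0 k : mexp 0%MM k = 0%N.
Proof. exact: mnm0E. Qed.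

Lemma mexpD (m u : 'X_{1..10}) k : mexp (m + u) k = (mexp m k + mexp u k)%N.
Proof. exact: mnmDE. Qed.

Lemma lem_mexp (u m : 'X_{1..10}) :
  (u <= m)%MM = all (fun k => mexp u k <= mexp m k)%N (iota 0 10).
Proof.
apply/mnm_lepP/allP => [le_um k _ | le_um i]; first exact: le_um.
by rewrite -(inord_val i); apply: le_um; rewrite mem_iota ltn_ord.
Qed.

Lemma eqm_mexp (u m : 'X_{1..10}) :
  (u == m) = all (fun k => mexp u k == mexp m k) (iota 0 10).
Proof.
apply/eqP/allP => [-> k _ // | eq_um]; apply/mnmP => i.
by rewrite -(inord_val i); apply/eqP/eq_um; rewrite mem_iota ltn_ord.
Qed.

Definition mgen (ks : seq nat) : 'X_{1..10} := (\sum_(k <- ks) U_(inord k))%MM.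

Lemma mexp_mgen ks k : all (fun j => j < 10)%N ks -> (k < 10)%N ->
  mexp (mgen ks) k = count_mem k ks.
Proof.
move=> + lt_k10; elim: ks => [|j ks IHks] /=; first by rewrite /mexp mnm_sumE big_nil.
case/andP=> lt_j10 /IHks <-; rewrite /mexp /mgen big_cons mnmDE mnm1E.
by rewrite -val_eqE /= !inordK.
Qed.

Lemma mpolyX_mgen ks : 'X_[mgen ks] = \prod_(k <- ks) 'X_(inord k) :> {mpoly int[10]}.
Proof. exact: (big_morph _ (@mpolyXD 10 int) (@mpolyX0 10 int)). Qed.

Definition mA := mgen [:: 9; 0; 4; 7]%N.
Definition mB := mgen [:: 9; 1; 5; 8]%N.
Definition mC := mgen [:: 9; 2; 3; 6]%N.
Definition mD := mgen [:: 9; 6; 7; 8]%N.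
Definition mE := mgen [:: 9; 9; 0; 1; 2; 3; 4; 5]%N.

Lemma mpolyX_mA : 'X_[mA] = Y * X 1 * X 5 * X 8.
Proof. by rewrite mpolyX_mgen !big_cons big_nil mulr1 !mulrA. Qed.
Lemma mpolyX_mB : 'X_[mB] = Y * X 2 * X 6 * X 9.
Proof. by rewrite mpolyX_mgen !big_cons big_nil mulr1 !mulrA. Qed.
Lemma mpolyX_mC : 'X_[mC] = Y * X 3 * X 4 * X 7.
Proof. by rewrite mpolyX_mgen !big_cons big_nil mulr1 !mulrA. Qed.
Lemma mpolyX_mD : 'X_[mD] = Y * X 7 * X 8 * X 9.
Proof. by rewrite mpolyX_mgen !big_cons big_nil mulr1 !mulrA. Qed.
Lemma mpolyX_mE : 'X_[mE] = Y ^+ 2 * X 1 * X 2 * X 3 * X 4 * X 5 * X 6.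
Proof. by rewrite mpolyX_mgen !big_cons big_nil mulr1 !mulrA expr2. Qed.

Definition G2_endpoint (v k : nat) : bool :=
  ((nth (0,0) G2_edges k).1.-1 == v) || ((nth (0,0) G2_edges k).2.-1 == v).

Lemma incident_G2 (v : 'I_6) k : (k < 9)%N -> incident G2_ends v (inord k) = G2_endpoint v k.
Proof.
move=> lt_k9; have /allP/(_ _ (@mem_nth _ (0,0)%N G2_edges k lt_k9))/andP[lt1 lt2] :
  all (fun e : nat * nat => (e.1.-1 < 6) && (e.2.-1 < 6))%N G2_edges by [].
by rewrite /incident /G2_ends inordK // -!val_eqE /= !inordK.
Qed.

Lemma is_magicG2E (a : 'I_9 -> nat) s : is_magic G2_ends a s =
  [&& a (inord 3) + a (inord 5) + a (inord 7) == s,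
      a (inord 0) + a (inord 1) + a (inord 6) == s,
      a (inord 3) + a (inord 4) + a (inord 8) == s,
      a (inord 1) + a (inord 2) + a (inord 7) == s,
      a (inord 4) + a (inord 5) + a (inord 6) == s &
      a (inord 0) + a (inord 2) + a (inord 8) == s]%N.
Proof.
have vertex_sum (v : 'I_6) : (\sum_(i < 9 | incident G2_ends v i) a i =
    \sum_(0 <= k < 9 | G2_endpoint v k) a (inord k))%N.
  rewrite big_mkcond [RHS]big_mkcond big_mkord; apply: eq_bigr => i _.
  by rewrite -incident_G2 // inord_val.
rewrite /is_magic -(big_andE predT) !big_ord_recl big_ord0 andbT !vertex_sum.
by rewrite /index_iota unlock /= !addn0 !addnA.
Qed.

Definition magic_mnm (m : 'X_{1..10}) : bool :=
  is_magic G2_ends (fun i : 'I_9 => m (inord i)) (m (inord 9)).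

Lemma magic_mnmE m : magic_mnm m =
  [&& mexp m 3 + mexp m 5 + mexp m 7 == mexp m 9,
      mexp m 0 + mexp m 1 + mexp m 6 == mexp m 9,
      mexp m 3 + mexp m 4 + mexp m 8 == mexp m 9,
      mexp m 1 + mexp m 2 + mexp m 7 == mexp m 9,
      mexp m 4 + mexp m 5 + mexp m 6 == mexp m 9 &
      mexp m 0 + mexp m 2 + mexp m 8 == mexp m 9]%N.
Proof. by rewrite /magic_mnm is_magicG2E !inordK. Qed.

Definition magic_ABCD : pred 'X_{1..10} :=
  [pred m | magic_mnm m && (mexp m 2 <= mexp m 6)%N].
Definition magic_ABCE : pred 'X_{1..10} :=
  [pred m | magic_mnm m && (mexp m 6 < mexp m 2)%N].
Definition zero_at (ks : seq nat) (S : pred 'X_{1..10}) : pred 'X_{1..10} :=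
  [pred m | S m && all (fun k => mexp m k == 0)%N ks].

Ltac mnm_lia :=
  rewrite /zero_at /magic_ABCD /magic_ABCE /= ?magic_mnmE ?lem_mexp ?eqm_mexp /=
    ?mexpD ?mexp0 ?mexp_mgen //=; lia.

Lemma fps_diff_magic_ABCD :
  fps_diff mD (fps_diff mC (fps_diff mB (fps_diff mA (fps_ind magic_ABCD)))) =1
  fps_ind (pred1 0%MM).
Proof.
(* On A^a B^b C^c D^d the exponents a, b, c are the labels of a_1, a_2, a_3. *)
apply: (fps_diff_ind (S := zero_at [:: 0; 1; 2]%N magic_ABCD)) => [m|m|m|]; [mnm_lia ..|].
apply: (fps_diff_ind (S := zero_at [:: 0; 1]%N magic_ABCD)) => [m|m|m|]; [mnm_lia ..|].
apply: (fps_diff_ind (S := zero_at [:: 0]%N magic_ABCD)) => [m|m|m|]; [mnm_lia ..|].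
by apply: (fps_diff_ind (S := magic_ABCD)) => [m|m|m|//]; mnm_lia.
Qed.

Lemma fps_diff_magic_ABCE :
  fps_diff mE (fps_diff mC (fps_diff mB (fps_diff mA (fps_ind magic_ABCE)))) =1
  fps_ind (pred1 mE).
Proof.
(* On A^a B^b C^c E^e the exponents a, b, c are the labels of a_8, a_9, a_7. *)
apply: (fps_diff_ind (S := zero_at [:: 7; 8; 6]%N magic_ABCE)) => [m|m|m|]; [mnm_lia ..|].
apply: (fps_diff_ind (S := zero_at [:: 7; 8]%N magic_ABCE)) => [m|m|m|]; [mnm_lia ..|].
apply: (fps_diff_ind (S := zero_at [:: 7]%N magic_ABCE)) => [m|m|m|]; [mnm_lia ..|].
by apply: (fps_diff_ind (S := magic_ABCE)) => [m|m|m|//]; mnm_lia.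
Qed.

Lemma FG2_split : FG2 =1 fun m => fps_ind magic_ABCD m + fps_ind magic_ABCE m.
Proof.
move=> m; have -> : FG2 m = (magic_mnm m)%:Z by [].
rewrite /fps_ind /magic_ABCD /magic_ABCE /=.
by case: (magic_mnm m); case: (leqP (mexp m 2) (mexp m 6)).
Qed.

Lemma FG2_denominator m :
  mul_poly_fps ((1 - Y * X 1 * X 5 * X 8) * (1 - Y * X 2 * X 6 * X 9) *
                (1 - Y * X 3 * X 4 * X 7) * (1 - Y * X 7 * X 8 * X 9) *
                (1 - Y ^+ 2 * X 1 * X 2 * X 3 * X 4 * X 5 * X 6)) FG2 m =
  ((1 - Y ^+ 2 * X 1 * X 2 * X 3 * X 4 * X 5 * X 6) +
   (Y ^+ 2 * X 1 * X 2 * X 3 * X 4 * X 5 * X 6) * (1 - Y * X 7 * X 8 * X 9))@_m.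
Proof.
rewrite -mpolyX_mA -mpolyX_mB -mpolyX_mC -mpolyX_mD -mpolyX_mE.
have -> : (1 - 'X_[mE]) + 'X_[mE] * (1 - 'X_[mD]) = 1 - 'X_[mE + mD] :> {mpoly int[10]}.
  by rewrite mpolyXD; ring.
rewrite mcoeffB mcoeff1 mcoeffX (eq_mul_poly_fps _ FG2_split) mul_poly_fpsDr.
set P := _ * (1 - 'X_[mE]).
have P_ABCD : P = \prod_(u <- [:: mE; mD; mC; mB; mA]) (1 - 'X_[u]).
  by rewrite !big_cons big_nil /P; ring.
have P_ABCE : P = \prod_(u <- [:: mD; mE; mC; mB; mA]) (1 - 'X_[u]).
  by rewrite !big_cons big_nil /P; ring.
rewrite {1}P_ABCD {}P_ABCE !mul_poly_fps_prod1subX /=.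
rewrite (fps_diff_ind1 _ fps_diff_magic_ABCD).
rewrite (fps_diff_ind1 _ fps_diff_magic_ABCE).
by rewrite /fps_ind /= add0m addrA subrK !natz ![_ == m]eq_sym.
Qed.

Lemma sum_ord_leq b n : (b < n -> \sum_(k < n) (k <= b) = b.+1)%N.
Proof.
elim: b n => [|b IHb] [|n] //= lt_bn; rewrite big_ord_recl.
  by rewrite big1 // => k _; rewrite lift0.
by rewrite (eq_bigr (fun k : 'I_n => nat_of_bool (k <= b)%N)) ?IHb.
Qed.

Lemma sum_ord2_leq a n1 n2 : (a < n1 -> a < n2 ->
  \sum_(i < n1) \sum_(k < n2) (i + k <= a) = 'C(a.+2, 2))%N.
Proof.
elim: a n1 => [|a IHa] [|n1] // lt_an1 lt_an2; rewrite big_ord_recl sum_ord_leq //.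
  by rewrite big1 // => i _; apply: big1.
rewrite binS bin1 addnC; congr (_ + _).
by rewrite -(IHa n1) //; apply: ltnW.
Qed.

Lemma big_ord3_peel (F : nat -> nat -> nat -> nat) n :
  (\sum_(i < n.+1) \sum_(j < n.+1) \sum_(k < n.+1) F i j k =
   \sum_(j < n.+1) \sum_(k < n.+1) F 0 j k + \sum_(i < n) \sum_(k < n.+1) F i.+1 0 k +
   \sum_(i < n) \sum_(j < n) F i.+1 j.+1 0 +
   \sum_(i < n) \sum_(j < n) \sum_(k < n) F i.+1 j.+1 k.+1)%N.
Proof.
rewrite big_ord_recl -!addnA; congr (_ + _); rewrite -!big_split /=.
apply: eq_bigr => i _; rewrite big_ord_recl; congr (_ + _); rewrite -big_split /=.
by apply: eq_bigr => j _; rewrite big_ord_recl.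
Qed.

Definition box_count (n s : nat) : nat :=
  (\sum_(i < n) \sum_(j < n) \sum_(k < n) [&& i + j <= s, j + k <= s & i + k <= s])%N.

Lemma box_countS n s : (s < n)%N -> box_count n.+1 s = box_count n s.
Proof.
move=> lt_sn; rewrite /box_count big_ord_recr /= [X in (_ + X)%N]big1 ?addn0; last first.
  by move=> j _; apply: big1 => k _; lia.
apply: eq_bigr => i _; rewrite big_ord_recr /= [X in (_ + X)%N]big1 ?addn0.
  by apply: eq_bigr => j _; rewrite big_ord_recr /=; lia.
by move=> k _; lia.
Qed.

Lemma box_count_rec s :
  box_count s.+3 s.+2 = (box_count s.+2 s + 'C(s.+4, 2) + 'C(s.+3, 2) + 'C(s.+2, 2))%N.
Proof.
rewrite /box_count (big_ord3_peel
  (fun i j k => [&& i + j <= s.+2, j + k <= s.+2 & i + k <= s.+2]%N)).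
rewrite -(sum_ord2_leq (n1 := s.+3) (n2 := s.+3)) //.
rewrite -(sum_ord2_leq (n1 := s.+2) (n2 := s.+3)) //.
rewrite -(sum_ord2_leq (n1 := s.+2) (n2 := s.+2)) // addnC !addnA.
congr (_ + _ + _ + _).
- by do 3![apply: eq_bigr => ? _]; lia.
- by do 2![apply: eq_bigr => ? _]; lia.
- by do 2![apply: eq_bigr => ? _]; lia.
- by do 2![apply: eq_bigr => ? _]; lia.
Qed.

Lemma hG2_box s : hG2 s = box_count s.+1 s.
Proof.
pose M := [set a : {ffun 'I_9 -> 'I_s.+1} | is_magic G2_ends (fun i => nat_of_ord (a i)) s].
pose phi (a : {ffun 'I_9 -> 'I_s.+1}) := (a (inord 0), a (inord 1), a (inord 2)).
have phi_inj : {in M &, injective phi}.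
  move=> a b; rewrite !inE !is_magicG2E => mag_a mag_b.
  case=> /(congr1 (@nat_of_ord _)) eq0 /(congr1 (@nat_of_ord _)) eq1.
  move/(congr1 (@nat_of_ord _)) => eq2.
  apply/ffunP => x; apply: ord_inj; rewrite -(inord_val x).
  by case: x => [[|[|[|[|[|[|[|[|[|//]]]]]]]]] _] /=; lia.
have phi_M : phi @: M = [set p : 'I_s.+1 * 'I_s.+1 * 'I_s.+1 |
    [&& p.1.1 + p.1.2 <= s, p.1.2 + p.2 <= s & p.1.1 + p.2 <= s]%N].
  apply/setP => -[[i j] k]; rewrite !inE /=; apply/imsetP/idP => [[a] | tri_ijk].
    by rewrite inE is_magicG2E => mag_a [-> -> ->]; lia.
  pose L := [:: val i; val j; val k; val k; val i; val j;
               s - i - j; s - j - k; s - i - k]%N.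
  pose a := [ffun x : 'I_9 => inord (nth 0%N L x) : 'I_s.+1].
  have aE x : (x < 9)%N -> a (inord x) = nth 0%N L x :> nat.
    move=> lt_x9; rewrite ffunE inordK // inordK // ltnS.
    by case: x lt_x9 => [|[|[|[|[|[|[|[|[|//]]]]]]]]] _ /=; lia.
  exists a; first by rewrite inE is_magicG2E !aE //=; lia.
  by rewrite /phi; congr (_, _, _); apply: ord_inj; rewrite aE.
rewrite /hG2 -(card_in_imset phi_inj) phi_M -sum1_card big_mkcond.
rewrite /box_count !pair_big /=.
by apply: eq_bigr => -[[i j] k] _; rewrite inE; case: ifP.
Qed.

Lemma hG2_rec s : hG2 s.+2 = (hG2 s + 'C(s.+4, 2) + 'C(s.+3, 2) + 'C(s.+2, 2))%N.
Proof. by rewrite !hG2_box box_count_rec box_countS. Qed.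

Lemma hG2_linear_rec t :
  (hG2 t.+1.+4 + 2 * hG2 t.+3 + 2 * hG2 t.+2 + hG2 t = 3 * hG2 t.+4 + 3 * hG2 t.+1)%N.
Proof.
have binS2 a : 'C(a.+1, 2) = ('C(a, 2) + a)%N by rewrite binS bin1.
have := hG2_rec t; have := hG2_rec t.+1; have := hG2_rec t.+2; have := hG2_rec t.+3.
have := binS2 t.+2; have := binS2 t.+3; have := binS2 t.+4; have := binS2 t.+1.+4.
have := binS2 t.+2.+4; lia.
Qed.

Lemma hG2_denominator s :
  mul_poly_fps1 ((1 - 'X) ^+ 3 * (1 - 'X ^+ 2)) hG2 s = (1 + 'X + 'X ^+ 2 : {poly int})`_s.
Proof.
have coefP k : ((1 - 'X) ^+ 3 * (1 - 'X ^+ 2) : {poly int})`_k = [:: 1; -3; 2; 2; -3; 1]`_k.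
  have -> : (1 - 'X) ^+ 3 * (1 - 'X ^+ 2) =
      1 - 'X *+ 3 + 'X ^+ 2 *+ 2 + 'X ^+ 3 *+ 2 - 'X ^+ 4 *+ 3 + 'X ^+ 5 :> {poly int}.
    by ring.
  by rewrite !coefE; case: k => [|[|[|[|[|[|k]]]]]] /=; rewrite ?nth_nil.
have h0 : hG2 0 = 1%N by rewrite hG2_box /box_count !big_ord_recl !big_ord0.
have h1 : hG2 1 = 4%N by rewrite hG2_box /box_count !big_ord_recl !big_ord0.
have h2 : hG2 2 = 11%N by rewrite hG2_rec h0.
have h3 : hG2 3 = 23%N by rewrite hG2_rec h1.
have h4 : hG2 4 = 42%N by rewrite hG2_rec h2.
rewrite /mul_poly_fps1 (eq_bigr (fun k : 'I_s.+1 =>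
  [:: 1; -3; 2; 2; -3; 1]`_k * (hG2 (s - k))%:Z)); last by move=> k _; rewrite coefP.
rewrite !coefE; case: s => [|[|[|[|[|t]]]]];
  rewrite !big_ord_recl ?big_ord0 /bump /= ?subSS ?subn0; [lia ..|].
rewrite big1 => [|i _]; last by rewrite nth_nil mul0r.
have := hG2_linear_rec t; lia.
Qed.

Theorem mainTheorem4 :
  (let A := Y * X 1 * X 5 * X 8 in
   let B := Y * X 2 * X 6 * X 9 in
   let C := Y * X 3 * X 4 * X 7 in
   let D := Y * X 7 * X 8 * X 9 in
   let E := Y ^+ 2 * X 1 * X 2 * X 3 * X 4 * X 5 * X 6 in
   forall m : 'X_{1..10},
     mul_poly_fps ((1 - A) * (1 - B) * (1 - C) * (1 - D) * (1 - E)) FG2 m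
     = ((1 - E) + E * (1 - D))@_m)
  /\
  (forall s : nat,
     mul_poly_fps1 ((1 - 'X) ^+ 3 * (1 - 'X ^+ 2)) hG2 s
     = (1 + 'X + 'X ^+ 2 : {poly int})`_s).
Proof. by split; [exact: FG2_denominator | exact: hG2_denominator]. Qed.
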